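(* Let $T$ be a tree with $|V(T)|$ even, and suppose the $3$-coloring game is being played on $T$ (starting from the uncolored tree, Alice moving first). If at some point of the game the current partial coloring contains an uncolored path $P_4$ that is surrounded by a color $\alpha$, i.e. each vertex of the $P_4$ has a neighbor colored $\alpha$ and no neighbor colored with a color other than $\alpha$, then Bob can win the $3$-coloring game on $T$.
   Context: The $3$-coloring game on a graph: Alice and Bob alternate turns, Alice first, each coloring an uncolored vertex with one of $3$ colors not used on any of its neighbors; Bob wins if at some point an uncolored vertex has no such color available; Alice wins if all vertices become colored. *)

From mathcomp Require Import all_boot.
Set Implicit Arguments. Unset Strict Implicit. Unset Printing Implicit Defensive.

Definition simple_graph (T : finType) (e : rel T) : Prop :=
  symmetric e /\ irreflexive e.

(* A tree: nonempty, connected, with |E| = |V| - 1.  Edges are counted as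
   ordered pairs, so the ordered-pair count is 2(|V|-1). *)
Definition is_tree (T : finType) (e : rel T) : Prop :=
  [/\ simple_graph e, 0 < #|T|,
      (forall x y : T, connect e x y) &
      #|[set p : T * T | e p.1 p.2]| = 2 * (#|T|).-1].

(* Partial 3-colorings: None = uncolored. *)
Definition pcol (T : finType) := {ffun T -> option 'I_3}.

Definition available (T : finType) (e : rel T) (c : pcol T) (v : T) (k : 'I_3) :=
  forall u, e v u -> c u <> Some k.

Definition blocked (T : finType) (e : rel T) (c : pcol T) :=
  exists v, c v = None /\ forall k, ~ available e c v k.

Definition legal (T : finType) (e : rel T) (c : pcol T) (v : T) (k : 'I_3) :=
  c v = None /\ available e c v k.

Definition recolor (T : finType) (c : pcol T) (v : T) (k : 'I_3) : pcol T :=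
  [ffun u => if u == v then Some k else c u].

Definition ncolored (T : finType) (c : pcol T) := #|[set v | c v != None]|.

(* Alice moves first, players alternate: it is Alice's turn iff the number
   of colored vertices is even. *)
Definition alice_turn (T : finType) (c : pcol T) := ~~ odd (ncolored c).

Definition empty_col (T : finType) : pcol T := [ffun _ => None].

(* Positions reachable during the game, started from the uncolored graph
   (the game stops as soon as Bob has won). *)
Inductive reachable (T : finType) (e : rel T) : pcol T -> Prop :=
| reach0 : reachable e (empty_col T)
| reachS c v k : reachable e c -> ~ blocked e c -> legal e c v k ->
    reachable e (recolor c v k).

(* The game is finite, so the inductive (least fixed
   point) definition captures exactly the existence of a winning strategy. *)
Inductive bob_wins (T : finType) (e : rel T) : pcol T -> Prop :=
| bw_blocked c : blocked e c -> bob_wins e c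
| bw_alice c : alice_turn c -> ~ blocked e c -> (exists v, c v = None) ->
    (forall v k, legal e c v k -> bob_wins e (recolor c v k)) -> bob_wins e c
| bw_bob c v k : ~~ alice_turn c -> ~ blocked e c -> legal e c v k ->
    bob_wins e (recolor c v k) -> bob_wins e c.

Definition surrounded (T : finType) (e : rel T) (c : pcol T) (v : T) (alpha : 'I_3) :=
  (exists u, e v u /\ c u = Some alpha) /\
  (forall u beta, e v u -> c u = Some beta -> beta = alpha).

Definition has_surrounded_P4 (T : finType) (e : rel T) (c : pcol T) :=
  exists (a b x d : T) (alpha : 'I_3),
    [/\ uniq [:: a; b; x; d], e a b, e b x & e x d] /\
    (forall w, w \in [:: a; b; x; d] -> c w = None /\ surrounded e c w alpha).

From mathcomp Require Import all_boot.
From Stdlib Require Import Classical.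

Set Implicit Arguments. Unset Strict Implicit. Unset Printing Implicit Defensive.

(* A vertex [p] that sees two different colors, next to an uncolored [q] that
   can still take the third one, is a threat: Bob colors [q] and blocks [p].
   Whatever color Alice puts next to the alpha-surrounded path differs from
   alpha and creates such a threat; her other moves keep the path surrounded.
   On Bob's turn an odd number of vertices is uncolored (|V(T)| is even), so
   some uncolored [w] lies off the path, and Bob colors it harmlessly (with
   alpha, or anyhow if [w] is not next to the path).  Otherwise [w] is next to
   the path and either sees a second color, which is already a threat, or is
   itself surrounded by alpha; then one move of Bob creates two threats that,
   the tree being acyclic, no single move of Alice defuses. *)

Section TreeAcyclic.
Variables (T : finType) (e : rel T) (r : T).
Hypotheses (e_sym : symmetric e) (e_conn : forall x y : T, connect e x y)
  (card_edges : #|[set p : T * T | e p.1 p.2]| = 2 * (#|T|).-1).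

Definition has_walk (v : T) (n : nat) :=
  [exists t : n.-tuple T, path e r t && (last r t == v)].

Lemma has_walk_exists v : exists n, has_walk v n.
Proof.
case/connectP: (e_conn r v) => p p_path ->; exists (size p); apply/existsP.
by exists (in_tuple p); rewrite /= p_path eqxx.
Qed.

Definition dist v := ex_minn (has_walk_exists v).

Lemma dist_descent v : v != r -> exists u, e v u && (dist u < dist v).
Proof.
move=> v_r; rewrite /dist; case: ex_minnP => n /existsP [[p /= /eqP <-]].
case/lastP: p => [|p u] /andP [] /=; first by move=> _ /eqP r_v; rewrite r_v eqxx in v_r.
rewrite rcons_path last_rcons size_rcons => /andP [p_path eu] /eqP <- _.
exists (last r p); rewrite e_sym eu /=.
case: ex_minnP => m _ /(_ (size p)); apply.
by apply/existsP; exists (in_tuple p); rewrite /= p_path eqxx.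
Qed.

Definition parent v := odflt r [pick u | e v u && (dist u < dist v)].

Lemma parentP v : v != r -> e v (parent v) && (dist (parent v) < dist v).
Proof.
move=> v_r; rewrite /parent; case: pickP => [u //|no_u].
by have [u] := dist_descent v_r; rewrite no_u.
Qed.

(* The [2 (|T| - 1)] ordered edges are exactly the pairs [(v, parent v)] and
   [(parent v, v)] for [v != r], which are already that many. *)
Lemma edge_parent s t : e s t -> (s != r /\ t = parent s) \/ (t != r /\ s = parent t).
Proof.
move=> est.
set A := [set (v, parent v) | v in [set~ r]].
set B := [set (parent v, v) | v in [set~ r]].
set E := [set p : T * T | e p.1 p.2].
have card_A : #|A| = #|T|.-1 by rewrite card_imset ?cardsC1 // => u v [].
have card_B : #|B| = #|T|.-1 by rewrite card_imset ?cardsC1 // => u v [].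
have AB_disj : A :&: B = set0.
  apply/setP => [[p q]]; rewrite !inE; apply/negP => /andP [/imsetP [v] + [-> ->]].
  move=> /[!inE] v_r /imsetP [u] /[!inE] u_r [pv vu].
  have /andP [_] := parentP v_r; have /andP [_] := parentP u_r; rewrite -pv -vu.
  by move=> /ltn_trans /[apply]; rewrite ltnn.
have AB_sub : A :|: B \subset E.
  apply/subsetP => [[p q]]; rewrite !inE => /orP [] /imsetP [v] /[!inE] v_r [-> ->] /=.
    by case/andP: (parentP v_r).
  by rewrite e_sym; case/andP: (parentP v_r).
have /eqP E_AB : E == A :|: B.
  rewrite eq_sym eqEcard AB_sub /=.
  have := cardsUI A B; rewrite AB_disj cards0 addn0 card_A card_B card_edges => ->.
  by rewrite mul2n addnn.
have : (s, t) \in E by rewrite inE.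
by rewrite E_AB inE => /orP [] /imsetP [v] /[!inE] v_r [-> ->]; [left | right].
Qed.

Lemma parent_of_edge s t : e s t -> dist s <= dist t -> s = parent t.
Proof.
case/edge_parent => [[s_r ->] | [_ //]].
by case/andP: (parentP s_r) => _ /leq_trans /[apply]; rewrite ltnn.
Qed.

(* On a cycle, a vertex of maximal [dist] has two distinct neighbours, and
   both would have to be its parent. *)
Lemma tree_acyclic s : uniq s -> 2 < size s -> ~~ cycle e s.
Proof.
case: s => [//|x0 s0] s_uniq s_size; apply/negP => s_cycle.
case: (arg_maxnP dist (mem_head x0 s0)) => M M_in M_max.
have [i s' s_rot] := rot_to M_in.
have s'_max u : u \in M :: s' -> dist u <= dist M.
  by rewrite -s_rot mem_rot; exact: M_max.
have : uniq (M :: s') by rewrite -s_rot rot_uniq.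
have : cycle e (M :: s') by rewrite -s_rot rot_cycle.
have : 2 < size (M :: s') by rewrite -s_rot size_rot.
case: s' {s_rot} s'_max => [//|u1 [//|u s2]] s'_max _.
rewrite /= rcons_path => /and4P [eMu1 _ _ eu2M] /and4P [_ u1_notin _ _].
have u1_par : u1 = parent M.
  by apply: parent_of_edge; rewrite 1?e_sym ?s'_max // !inE eqxx orbT.
have u2_par : last u s2 = parent M.
  by apply: parent_of_edge; rewrite // s'_max // 2!inE mem_last !orbT.
by move: u1_notin; rewrite u1_par -u2_par mem_last.
Qed.

End TreeAcyclic.

Lemma ord3_mem (a b g k : 'I_3) : uniq [:: a; b; g] -> k \in [:: a; b; g].
Proof.
move=> U; apply/negPn/negP=> kN.
by have := max_card (mem [:: k; a; b; g]); rewrite card_ord (card_uniqP _) //= kN.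
Qed.

Lemma ord3_other (a b : 'I_3) : exists2 g : 'I_3, g != a & g != b.
Proof.
have /card_gt0P [g] : 0 < #|[predC [:: a; b]]|.
  by rewrite -(ltn_add2l #|[:: a; b]|) addn0 cardC card_ord (leq_ltn_trans (card_size _)).
by rewrite !inE negb_or => /andP [ga gb]; exists g.
Qed.

Section Game.
Variables (T : finType) (e : rel T).
Hypotheses (e_sym : symmetric e) (e_irr : irreflexive e).
Implicit Types (c : pcol T) (alpha beta gam j k : 'I_3).

Lemma edge_neq u v : e u v -> u != v.
Proof. by apply: contraTneq => ->; rewrite e_irr. Qed.

Lemma recolorE c v k u : recolor c v k u = if u == v then Some k else c u.
Proof. by rewrite ffunE. Qed.

Lemma recolor_other c v k u : u != v -> recolor c v k u = c u.
Proof. by move=> uv; rewrite recolorE (negbTE uv). Qed.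

Lemma recolor_colored c v k u j : c v = None -> c u = Some j -> recolor c v k u = Some j.
Proof. by rewrite recolorE; case: eqP => [-> ->|]. Qed.

Definition uncolored c := [set v | c v == None].

Lemma ncolored_uncolored c : ncolored c + #|uncolored c| = #|T|.
Proof.
rewrite /ncolored -(cardsC [set v | c v != None]); congr (_ + _).
by apply: eq_card => v; rewrite !inE negbK.
Qed.

Lemma uncolored_recolor c v k : uncolored (recolor c v k) = uncolored c :\ v.
Proof. by apply/setP => u; rewrite /uncolored !inE recolorE; case: (u =P v). Qed.

Lemma ncolored_recolor c v k : c v = None -> ncolored (recolor c v k) = (ncolored c).+1.
Proof.
move=> cv; have v_unc : v \in uncolored c by rewrite /uncolored inE cv.
apply/esym/(@addIn #|uncolored c :\ v|); rewrite addSnnS.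
rewrite -{2}(uncolored_recolor c v k) ncolored_uncolored -(ncolored_uncolored c).
by rewrite (cardsD1 v (uncolored c)) v_unc add1n.
Qed.

Lemma alice_turn_recolor c v k : c v = None -> alice_turn (recolor c v k) = ~~ alice_turn c.
Proof. by move=> cv; rewrite /alice_turn ncolored_recolor. Qed.

Definition seen c v j := exists u, e v u /\ c u = Some j.

Lemma seen_not_available c v j : seen c v j -> ~ available e c v j.
Proof. by move=> [u [evu cu]] /(_ u evu). Qed.

Lemma not_available_seen c v j : ~ available e c v j -> seen c v j.
Proof.
move=> not_av; apply: NNPP => not_seen.
by apply: not_av => u evu cu; apply: not_seen; exists u.
Qed.

Lemma seen_recolor c v k p j : c v = None -> seen c p j -> seen (recolor c v k) p j.
Proof. by move=> cv [u [epu cu]]; exists u; rewrite (recolor_colored _ cv cu). Qed.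

Lemma available_recolor c v k q j :
  available e c q j -> (e q v -> k != j) -> available e (recolor c v k) q j.
Proof.
move=> av kj u equ; rewrite recolorE; case: eqP => [uv [kE]|_]; last exact: av.
by move: equ; rewrite uv => /kj; rewrite kE eqxx.
Qed.

Lemma available_recolorW c v k p j :
  c v = None -> available e (recolor c v k) p j -> available e c p j.
Proof. by move=> cv av u epu cu; apply: av u epu (recolor_colored _ cv cu). Qed.

Lemma available_third c p j1 j2 j3 k : seen c p j1 -> seen c p j2 ->
  j1 != j2 -> j3 != j1 -> j3 != j2 -> available e c p k -> k = j3.
Proof.
move=> seen1 seen2 j12 j31 j32 av.
have : k \in [:: j1; j2; j3].
  by apply: ord3_mem; rewrite /= !inE negb_or j12 !(eq_sym _ j3) j31 j32.
rewrite !inE => /or3P [] /eqP // kE; exfalso.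
  by apply: (seen_not_available seen1); rewrite -kE.
by apply: (seen_not_available seen2); rewrite -kE.
Qed.

Definition threat c p q j :=
  [/\ c p = None, c q = None, e p q, available e c q j
    & forall k, available e c p k -> k = j].

Lemma bob_wins_threat c p q j : ~~ alice_turn c -> threat c p q j -> bob_wins e c.
Proof.
move=> turn [cp cq epq avq only_j].
case: (classic (blocked e c)) => [|not_blocked]; first exact: bw_blocked.
apply: (bw_bob turn not_blocked (conj cq avq)); apply: bw_blocked; exists p.
split=> [|k av]; first by rewrite recolor_other // edge_neq.
have kj := only_j k (available_recolorW cq av).
by apply: (av q epq); rewrite recolorE eqxx kj.
Qed.

Lemma threat_recolor c p q j v k : threat c p q j -> c v = None ->
  v != p -> v != q -> (e q v -> k != j) -> threat (recolor c v k) p q j.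
Proof.
move=> [cp cq epq avq only_j] cv vp vq qv; split=> //.
- by rewrite recolor_other // eq_sym.
- by rewrite recolor_other // eq_sym.
- exact: available_recolor.
- by move=> k' /(available_recolorW cv); apply: only_j.
Qed.

Lemma bob_wins_forcing_move c s j : ~~ alice_turn c -> legal e c s j ->
  (exists u, recolor c s j u = None) ->
  (forall v k, legal e (recolor c s j) v k ->
     exists p q j', threat (recolor (recolor c s j) v k) p q j') ->
  bob_wins e c.
Proof.
move=> turn [cs avs] some_uncolored reply.
case: (classic (blocked e c)) => [|not_blocked]; first exact: bw_blocked.
apply: (bw_bob turn not_blocked (conj cs avs)).
case: (classic (blocked e (recolor c s j))) => [|not_blocked2]; first exact: bw_blocked.
apply: bw_alice => //; first by rewrite alice_turn_recolor.
move=> v k [cv avk]; have [p [q [j' thr]]] := reply v k (conj cv avk).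
by apply: bob_wins_threat thr; rewrite !alice_turn_recolor // negbK.
Qed.

Definition usurrounded c alpha v := c v = None /\ surrounded e c v alpha.

Lemma available_surrounded c alpha q j :
  usurrounded c alpha q -> j != alpha -> available e c q j.
Proof.
by move=> [_ [_ only_alpha]] ja u equ /(only_alpha u j equ) jE; rewrite jE eqxx in ja.
Qed.

Lemma usurrounded_recolor c alpha w v k : usurrounded c alpha w -> c v = None ->
  v != w -> (k = alpha \/ ~ e w v) -> usurrounded (recolor c v k) alpha w.
Proof.
move=> [cw [seen_alpha only_alpha]] cv vw safe.
split; first by rewrite recolor_other // eq_sym.
split; first exact: seen_recolor.
move=> u beta ewu; rewrite recolorE; case: eqP => [uv [<-]|_]; last exact: only_alpha.
by case: safe => // /(_ _); rewrite -uv.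
Qed.

Lemma recolor_threat c alpha beta gam s p q : c s = None ->
  usurrounded c alpha p -> usurrounded c alpha q -> e p q -> e p s -> q != s ->
  beta != alpha -> gam != alpha -> gam != beta -> threat (recolor c s beta) p q gam.
Proof.
move=> cs [cp [seen_alpha _]] Sq epq eps qs ba ga gb; split=> //.
- by rewrite recolor_other // edge_neq.
- by rewrite recolor_other //; case: Sq.
- by apply: available_recolor (available_surrounded Sq ga) _ => _; rewrite eq_sym.
- move=> k; apply: (available_third (j1 := alpha) (j2 := beta)) => //; last by rewrite eq_sym.
    exact: seen_recolor.
  by exists s; rewrite recolorE eqxx.
Qed.

Hypothesis e_acyclic : forall s, uniq s -> 2 < size s -> ~~ cycle e s.

Lemma path_no_chord x s : uniq (x :: s) -> 1 < size s -> path e x s -> ~~ e x (last x s).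
Proof.
move=> xs_uniq s_size xs_path; rewrite e_sym.
by apply: contra (e_acyclic xs_uniq s_size) => ex; rewrite /= rcons_path xs_path.
Qed.

Definition surrounded_P4 c (a b x d : T) alpha :=
  [/\ uniq [:: a; b; x; d], e a b, e b x & e x d] /\
  (forall w, w \in [:: a; b; x; d] -> usurrounded c alpha w).

Lemma surrounded_P4_rev c a b x d alpha :
  surrounded_P4 c a b x d alpha -> surrounded_P4 c d x b a alpha.
Proof.
move=> [[U eab ebx exd] S]; split; last by move=> w w_in; apply: S; rewrite -mem_rev.
by split; rewrite 1?e_sym // -rev_uniq.
Qed.

Lemma surrounded_P4_recolor c a b x d alpha v k :
  surrounded_P4 c a b x d alpha -> c v = None -> v \notin [:: a; b; x; d] ->
  (k = alpha \/ forall z, z \in [:: a; b; x; d] -> ~ e z v) ->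
  surrounded_P4 (recolor c v k) a b x d alpha.
Proof.
move=> [P4 S] cv vP safe; split=> // z zP.
apply: usurrounded_recolor (S z zP) cv _ _; first by apply: contraNneq vP => ->.
by case: safe => [|not_adj]; [left | right; apply: not_adj].
Qed.

Hypothesis T_even : ~~ odd #|T|.

Lemma uncolored_outside_P4 c a b x d alpha : ~~ alice_turn c ->
  surrounded_P4 c a b x d alpha -> exists2 w, c w = None & w \notin [:: a; b; x; d].
Proof.
move=> turn [[U _ _ _] S]; apply: NNPP => none_outside.
have unc : uncolored c = [set w in [:: a; b; x; d]].
  apply/setP => w; rewrite /uncolored !in_set.
  apply/eqP/idP => [cw|wP]; last by case: (S w wP).
  by apply/negPn/negP => wP; apply: none_outside; exists w.
have := ncolored_uncolored c; rewrite unc cardsE (card_uniqP U) => card_T.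
by move: T_even turn; rewrite -card_T /alice_turn oddD addbF => /negbTE ->.
Qed.

Lemma alice_move_P4 c a b x d alpha v k : alice_turn c ->
  surrounded_P4 c a b x d alpha -> legal e c v k ->
  bob_wins e (recolor c v k) \/ surrounded_P4 (recolor c v k) a b x d alpha.
Proof.
move=> turn P4c [cv avk]; have [[U eab ebx exd] S] := P4c.
move: (U); rewrite /= !inE !negb_or => /and4P [/and3P [_ ax _] /andP [_ bd] _ _].
have pinch P Q : P \in [:: a; b; x; d] -> Q \in [:: a; b; x; d] ->
    e P Q -> e P v -> Q != v -> k != alpha -> bob_wins e (recolor c v k).
  move=> PP QP ePQ ePv Qv ka; have [j ja jk] := ord3_other alpha k.
  apply: bob_wins_threat (recolor_threat cv (S P PP) (S Q QP) ePQ ePv Qv ka ja jk).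
  by rewrite alice_turn_recolor // turn.
have [vP|vP] := boolP (v \in [:: a; b; x; d]).
  have ka : k != alpha.
    by apply/eqP => ka; have [_ [[u [evu cu]] _]] := S v vP; apply: (avk u evu); rewrite cu ka.
  left; move: vP; rewrite !inE => /or4P [] /eqP vE; subst v.
  - by apply: (pinch b x); rewrite ?inE ?eqxx ?orbT // 1?e_sym // eq_sym.
  - by apply: (pinch x d); rewrite ?inE ?eqxx ?orbT // 1?e_sym // eq_sym.
  - by apply: (pinch b a); rewrite ?inE ?eqxx ?orbT // 1?e_sym.
  - by apply: (pinch x b); rewrite ?inE ?eqxx ?orbT // 1?e_sym.
have notin_neq z : z \in [:: a; b; x; d] -> z != v by apply: contraTneq => ->.
case: (classic (k != alpha /\ exists2 P, P \in [:: a; b; x; d] & e P v)).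
  move=> [ka [P PP ePv]]; left; move: PP ePv.
  rewrite !inE => /or4P [] /eqP -> ePv.
  - by apply: (pinch a b); rewrite ?notin_neq ?inE ?eqxx ?orbT.
  - by apply: (pinch b a); rewrite ?notin_neq ?inE ?eqxx ?orbT // e_sym.
  - by apply: (pinch x b); rewrite ?notin_neq ?inE ?eqxx ?orbT // e_sym.
  - by apply: (pinch d x); rewrite ?notin_neq ?inE ?eqxx ?orbT // e_sym.
move=> safe; right; apply: surrounded_P4_recolor => //.
case: (eqVneq k alpha) => [|ka]; [left | right => z zP ezv] => //.
by apply: safe; split; last exists z.
Qed.

Lemma bob_wins_end_pendant c w a b x d alpha : ~~ alice_turn c ->
  surrounded_P4 c a b x d alpha -> usurrounded c alpha w ->
  w \notin [:: a; b; x; d] -> e w a -> bob_wins e c.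
Proof.
move=> turn [[U eab ebx exd] S] Sw wP ewa.
have [Sa Sb Sx Sd] : [/\ usurrounded c alpha a, usurrounded c alpha b,
    usurrounded c alpha x & usurrounded c alpha d].
  by split; apply: S; rewrite !inE eqxx ?orbT.
move: (U); rewrite /= !inE !negb_or => /and4P [/and3P [ab ax ad] /andP [_ bd] _ _].
move: (wP); rewrite !inE !negb_or => /and4P [_ wb wx wd].
have U5 : uniq [:: w; a; b; x; d] by rewrite cons_uniq wP U.
have nwx : ~~ e w x by apply: (path_no_chord (take_uniq 4 U5)); rewrite //= ewa eab ebx.
have nwd : ~~ e w d by apply: (path_no_chord U5); rewrite //= ewa eab ebx exd.
have nad : ~~ e a d by apply: (path_no_chord U); rewrite //= eab ebx exd.
have no_common v : v != a -> v != b -> v != x -> e w v -> ~~ e v d.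
  move=> va vb vx ewv; have vw : v != w by rewrite edge_neq // e_sym.
  apply/negP => evd; have vd := edge_neq evd; apply/negP: evd.
  apply: (@path_no_chord v [:: w; a; b; x; d]) => //.
    by rewrite cons_uniq U5 !inE !negb_or vw va vb vx vd.
  by rewrite /= e_sym ewv ewa eab ebx exd.
have [beta ba _] := ord3_other alpha alpha.
have [gam ga gb] := ord3_other alpha beta.
have [cb _] := Sb.
apply: (bob_wins_forcing_move (s := b) (j := beta)) => //.
- by split; last exact: available_surrounded Sb ba.
- by exists a; rewrite recolor_other //; case: Sa.
move=> v k [c2v _].
have eaw : e a w by rewrite e_sym.
have exb : e x b by rewrite e_sym.
have db : d != b by rewrite eq_sym.
have threat_a := recolor_threat cb Sa Sw eaw eab wb ba ga gb.
have threat_x := recolor_threat cb Sx Sd exd exb db ba ga gb.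
have vb : v != b by apply/eqP => vE; move: c2v; rewrite vE recolorE eqxx.
case: (eqVneq v a) c2v => [->|va] c2v.
  exists x, d, gam; apply: (threat_recolor threat_x c2v ax ad).
  by rewrite e_sym (negbTE nad).
case: (eqVneq v w) c2v => [->|vw] c2v.
  exists x, d, gam; apply: (threat_recolor threat_x c2v wx wd).
  by rewrite e_sym (negbTE nwd).
case: (boolP (e w v && (k == gam))) => [/andP [ewv /eqP ->]|safe_a].
  have vx : v != x by apply: contraNneq nwx => <-.
  have vd : v != d by apply: contraNneq nwd => <-.
  exists x, d, gam; apply: (threat_recolor threat_x c2v vx vd).
  by rewrite e_sym (negbTE (no_common v va vb vx ewv)).
exists a, w, gam; apply: (threat_recolor threat_a c2v va vw).
by move=> ewv; move: safe_a; rewrite ewv.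
Qed.

Lemma bob_wins_inner_pendant c w a b x d alpha : ~~ alice_turn c ->
  surrounded_P4 c a b x d alpha -> usurrounded c alpha w ->
  w \notin [:: a; b; x; d] -> e w b -> bob_wins e c.
Proof.
move=> turn [[U eab ebx exd] S] Sw wP ewb.
have [Sa Sb Sx Sd] : [/\ usurrounded c alpha a, usurrounded c alpha b,
    usurrounded c alpha x & usurrounded c alpha d].
  by split; apply: S; rewrite !inE eqxx ?orbT.
move: (U); rewrite /= !inE !negb_or => /and4P [/and3P [ab ax _] /andP [bx bd] xd _].
move: (wP); rewrite !inE !negb_or => /and4P [wa wb wx wd].
have U4 : uniq [:: w; b; x; d] by rewrite /= !inE !negb_or wb wx wd bx bd xd.
have nwx : ~~ e w x by apply: (path_no_chord (take_uniq 3 U4)); rewrite //= ewb ebx.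
have nwd : ~~ e w d by apply: (path_no_chord U4); rewrite //= ewb ebx exd.
have nax : ~~ e a x by apply: (path_no_chord (take_uniq 3 U)); rewrite //= eab ebx.
have no_common v : v != b -> e a v -> ~~ e v x.
  move=> vb eav; have va : v != a by rewrite edge_neq // e_sym.
  apply/negP => evx; have vx := edge_neq evx; apply/negP: evx.
  apply: (@path_no_chord v [:: a; b; x]) => //.
    by rewrite /= !inE !negb_or va vb vx ab ax bx.
  by rewrite /= e_sym eav eab ebx.
have [beta ba _] := ord3_other alpha alpha.
have [gam ga gb] := ord3_other alpha beta.
have [[cb _] [cw _]] := (Sb, Sw).
apply: (bob_wins_forcing_move (s := w) (j := beta)) => //.
- by split; last exact: available_surrounded Sw ba.
- by exists b; rewrite recolor_other // eq_sym.
move=> v k [c2v avk].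
have eba : e b a by rewrite e_sym.
have ebw : e b w by rewrite e_sym.
have exb : e x b by rewrite e_sym.
have aw : a != w by rewrite eq_sym.
have xw : x != w by rewrite eq_sym.
have db : d != b by rewrite eq_sym.
have threat_a := recolor_threat cw Sb Sa eba ebw aw ba ga gb.
have threat_x := recolor_threat cw Sb Sx ebx ebw xw ba ga gb.
case: (eqVneq v b) c2v avk => [->|vb] c2v avk.
  (* Alice colored [b] herself: now [x] sees [alpha] and [k], and [d] still takes [beta]. *)
  have ka : k != alpha.
    apply/eqP => ka; apply: (seen_not_available _ avk); rewrite ka.
    by apply: seen_recolor cw _; case: Sb => _ [].
  have kb : k != beta by apply/eqP => kb; apply: (avk w); rewrite 1?e_sym // recolorE eqxx kb.
  have Sx2 : usurrounded (recolor c w beta) alpha x.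
    by apply: usurrounded_recolor Sx cw wx _; right; apply/negP; rewrite e_sym.
  have Sd2 : usurrounded (recolor c w beta) alpha d.
    by apply: usurrounded_recolor Sd cw wd _; right; apply/negP; rewrite e_sym.
  exists x, d, beta.
  by apply: (recolor_threat c2v Sx2 Sd2 exd exb db ka ba); rewrite eq_sym.
case: (eqVneq v a) c2v => [->|va] c2v.
  exists b, x, gam; apply: (threat_recolor threat_x c2v ab ax).
  by rewrite e_sym (negbTE nax).
case: (boolP (e a v && (k == gam))) => [/andP [eav /eqP ->]|safe_a].
  have vx : v != x by apply: contraNneq nax => <-.
  exists b, x, gam; apply: (threat_recolor threat_x c2v vb vx).
  by rewrite e_sym (negbTE (no_common v vb eav)).
exists b, a, gam; apply: (threat_recolor threat_a c2v vb va).
by move=> eav; move: safe_a; rewrite eav.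
Qed.

Lemma bob_move_P4 c a b x d alpha : ~~ alice_turn c -> ~ blocked e c ->
  surrounded_P4 c a b x d alpha ->
  bob_wins e c \/ exists v k, legal e c v k /\ surrounded_P4 (recolor c v k) a b x d alpha.
Proof.
move=> turn not_blocked P4c.
have [w cw wP] := uncolored_outside_P4 turn P4c.
have [k0 av0] : exists k, available e c w k.
  apply: NNPP => none; apply: not_blocked; exists w.
  by split=> // k avk; apply: none; exists k.
case: (classic (available e c w alpha)) => [av_alpha|not_av_alpha].
  by right; exists w, alpha; split=> //; apply: surrounded_P4_recolor => //; left.
case: (classic (exists2 P, P \in [:: a; b; x; d] & e P w)) => [[P PP ePw]|not_adj]; last first.
  right; exists w, k0; split=> //; apply: surrounded_P4_recolor => //.
  by right=> z zP ezw; apply: not_adj; exists z.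
left; have SP := P4c.2 P PP.
case: (classic (exists2 j, j != alpha & seen c w j)) => [[j ja seen_j]|only_alpha].
  have [j3 j3a j3j] := ord3_other alpha j.
  apply: (bob_wins_threat turn (p := w) (q := P) (j := j3)); split=> //.
  - by case: SP.
  - by rewrite e_sym.
  - exact: available_surrounded SP j3a.
  - move=> k; apply: available_third (not_available_seen not_av_alpha) seen_j _ j3a j3j.
    by rewrite eq_sym.
have Sw : usurrounded c alpha w.
  split=> //; split=> [|u beta ewu cu]; first exact: not_available_seen.
  by apply: NNPP => /eqP beta_alpha; apply: only_alpha; exists beta => //; exists u.
have wP' : w \notin [:: d; x; b; a] by rewrite (mem_rev [:: a; b; x; d]).
have P4c' := surrounded_P4_rev P4c.
move: PP ePw; rewrite !inE => /or4P [] /eqP -> ePw.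
- by apply: (bob_wins_end_pendant turn P4c Sw wP); rewrite e_sym.
- by apply: (bob_wins_inner_pendant turn P4c Sw wP); rewrite e_sym.
- by apply: (bob_wins_inner_pendant turn P4c' Sw wP'); rewrite e_sym.
- by apply: (bob_wins_end_pendant turn P4c' Sw wP'); rewrite e_sym.
Qed.

Lemma bob_wins_surrounded_P4 c a b x d alpha :
  surrounded_P4 c a b x d alpha -> bob_wins e c.
Proof.
have [n] := ubnP #|uncolored c|; elim: n c => // n IH c lt_n P4c.
have IHr v k : c v = None -> surrounded_P4 (recolor c v k) a b x d alpha ->
    bob_wins e (recolor c v k).
  move=> cv; apply: IH; rewrite uncolored_recolor -ltnS (leq_trans _ lt_n) //.
  by rewrite (cardsD1 v (uncolored c)) /uncolored inE cv.
case: (classic (blocked e c)) => [|not_blocked]; first exact: bw_blocked.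
have [ca _] := P4c.2 a (mem_head _ _).
case: (boolP (alice_turn c)) => turn.
  apply: bw_alice => //; first by exists a.
  move=> v k [cv avk].
  by case: (alice_move_P4 turn P4c (conj cv avk)) => [|/(IHr v k cv)].
case: (bob_move_P4 turn not_blocked P4c) => [//|[v [k [[cv avk] P4r]]]].
exact: (bw_bob turn not_blocked (conj cv avk) (IHr v k cv P4r)).
Qed.

End Game.

Theorem lemma8p2 (T : finType) (e : rel T) (c : pcol T) :
  is_tree e -> ~~ odd #|T| ->
  reachable e c -> has_surrounded_P4 e c ->
  bob_wins e c.
Proof.
move=> [[e_sym e_irr] _ e_conn card_edges] T_even _ [a [b [x [d [alpha P4c]]]]].
have e_acyclic := tree_acyclic a e_sym e_conn card_edges.
exact: (bob_wins_surrounded_P4 e_sym e_irr e_acyclic T_even P4c).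
Qed.
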